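(* Let $f:[0,1]\to\mathbb{R}$ be a piecewise $C^1$, concave, non-negative function which is not identically zero, and let $$\Omega=\{(y_1,y_2)\in\mathbb{R}^2: 0\le y_1\le 1,\ |y_2|\le f(y_1)\}.$$ Let $a=\min\{\tau\in[0,1]: f(\tau)=\max_{[0,1]}f\}$ and $b=\max\{\tau\in[0,1]: f(\tau)=\max_{[0,1]}f\}$. Then $$uf(\Omega)\subset\{(y_1,0)\in\Omega: a/2\le y_1\le (1+b)/2\}.$$
   Context: Minimal unfolded region: for $v\in S^1$ and $c\in\mathbb{R}$ let $I_{v,c}$ be the reflection in the line $\{z: z\cdot v=c\}$, $\Omega^+_{v,a}=\Omega\cap\{z\cdot v\ge a\}$, $\Omega^-_{v,a}=\Omega\cap\{z\cdot v\le a\}$, $u(v)=\inf\{b: I_{v,c}(\Omega^+_{v,c})\subset\Omega\ \forall c\ge b\}$, $l(v)=\sup\{b: I_{v,c}(\Omega^-_{v,c})\subset\Omega\ \forall c\le b\}$, and $uf(\Omega)=\bigcap_{v\in S^1}\{z\in\mathbb{R}^2: l(v)\le z\cdot v\le u(v)\}$. *)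

From Stdlib Require Import Reals.
Open Scope R_scope.

Definition pt := (R * R)%type.

Definition dot (z v : pt) : R := fst z * fst v + snd z * snd v.

Definition in_S1 (v : pt) : Prop := fst v ^ 2 + snd v ^ 2 = 1.

(* reflection in the line {z : z.v = c} (v unit) *)
Definition refl (v : pt) (c : R) (z : pt) : pt :=
  (fst z - 2 * (dot z v - c) * fst v, snd z - 2 * (dot z v - c) * snd v).

Definition Omega_plus (Om : pt -> Prop) (v : pt) (a : R) (z : pt) : Prop :=
  Om z /\ dot z v >= a.
Definition Omega_minus (Om : pt -> Prop) (v : pt) (a : R) (z : pt) : Prop :=
  Om z /\ dot z v <= a.

Definition refl_sub (Om A : pt -> Prop) (v : pt) (c : R) : Prop :=
  forall z, A z -> Om (refl v c z).

(* the set whose infimum is u(v) *)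
Definition U_set (Om : pt -> Prop) (v : pt) (b : R) : Prop :=
  forall c, c >= b -> refl_sub Om (Omega_plus Om v c) v c.
(* the set whose supremum is l(v) *)
Definition L_set (Om : pt -> Prop) (v : pt) (b : R) : Prop :=
  forall c, c <= b -> refl_sub Om (Omega_minus Om v c) v c.

(* "x <= u(v)" with u(v) = inf U_set (in the extended reals):
   x is a lower bound of U_set *)
Definition le_u (Om : pt -> Prop) (v : pt) (x : R) : Prop :=
  forall b, U_set Om v b -> x <= b.
(* "l(v) <= x" with l(v) = sup L_set: x is an upper bound of L_set *)
Definition l_le (Om : pt -> Prop) (v : pt) (x : R) : Prop :=
  forall b, L_set Om v b -> b <= x.

Definition uf (Om : pt -> Prop) (z : pt) : Prop :=
  forall v, in_S1 v -> l_le Om v (dot z v) /\ le_u Om v (dot z v).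

Definition C1_on_interval (f : R -> R) (s t : R) : Prop :=
  exists g g' : R -> R,
    (forall x, derivable_pt_lim g x (g' x)) /\ continuity g' /\
    (forall x, s <= x <= t -> f x = g x).

Definition piecewise_C1 (f : R -> R) : Prop :=
  exists (n : nat) (t : nat -> R),
    t 0%nat = 0 /\ t n = 1 /\
    (forall i, (i < n)%nat -> t i < t (S i)) /\
    (forall i, (i < n)%nat -> C1_on_interval f (t i) (t (S i))).

Definition concave_on01 (f : R -> R) : Prop :=
  forall x y l, 0 <= x <= 1 -> 0 <= y <= 1 -> 0 <= l <= 1 ->
    l * f x + (1 - l) * f y <= f (l * x + (1 - l) * y).

Definition Omega_f (f : R -> R) (z : pt) : Prop :=
  0 <= fst z <= 1 /\ Rabs (snd z) <= f (fst z).

Definition is_argmax01 (f : R -> R) (tau : R) : Prop :=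
  0 <= tau <= 1 /\ forall x, 0 <= x <= 1 -> f x <= f tau.

From Stdlib Require Import Reals Lra.
Open Scope R_scope.

(* Omega_f is symmetric under y2 |-> -y2, so reflecting its part above
   (resp. below) a horizontal line y2 = c with c >= 0 (resp. c <= 0) stays
   inside it; so u(e2) <= 0 <= l(e2) and uf lies on the axis y2 = 0.  Reflecting in
   the vertical line y1 = c with c >= (1 + M)/2, M a maximum point of f, sends
   the part of Omega_f right of the line into [M, 1], where f is larger since
   a concave function decreases to the right of its maximum; hence
   u(e1) <= (1 + M)/2, and symmetrically l(e1) >= M/2. *)

Lemma Rabs_le_inv (x y : R) : Rabs x <= y -> - y <= x <= y.
Proof.
  intros H. pose proof (Rle_abs x). pose proof (Rle_abs (- x)).
  rewrite Rabs_Ropp in *. lra.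
Qed.

Lemma concave_between_argmax (f : R -> R) (M x y : R) :
  concave_on01 f -> is_argmax01 f M ->
  0 <= y <= 1 -> (M <= x <= y \/ y <= x <= M) -> f y <= f x.
Proof.
  intros Hc [HM Hmax] Hy Hx.
  destruct (Req_dec y M) as [->|HyM].
  - replace x with M by lra. lra.
  - set (l := (y - x) / (y - M)).
    assert (Hl_def : l * (y - M) = y - x) by (unfold l; field; lra).
    assert (Hl : 0 <= l <= 1) by (destruct Hx; split; nra).
    pose proof (Hc M y l HM Hy Hl) as Hconc.
    replace (l * M + (1 - l) * y) with x in Hconc by lra.
    pose proof (Hmax y Hy). nra.
Qed.

Lemma refl_e1 (c : R) (w : pt) : refl (1, 0) c w = (2 * c - fst w, snd w).
Proof. destruct w; unfold refl, dot; simpl; f_equal; ring. Qed.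

Lemma refl_e2 (c : R) (w : pt) : refl (0, 1) c w = (fst w, 2 * c - snd w).
Proof. destruct w; unfold refl, dot; simpl; f_equal; ring. Qed.

Lemma dot_e1 (w : pt) : dot w (1, 0) = fst w.
Proof. unfold dot; simpl; ring. Qed.

Lemma dot_e2 (w : pt) : dot w (0, 1) = snd w.
Proof. unfold dot; simpl; ring. Qed.

Lemma in_S1_e1 : in_S1 (1, 0).
Proof. unfold in_S1; simpl; ring. Qed.

Lemma in_S1_e2 : in_S1 (0, 1).
Proof. unfold in_S1; simpl; ring. Qed.

Lemma uf_dot_le (Om : pt -> Prop) (v z : pt) (b : R) :
  uf Om z -> in_S1 v -> U_set Om v b -> dot z v <= b.
Proof. intros Hz Hv Hb. exact (proj2 (Hz v Hv) b Hb). Qed.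

Lemma uf_dot_ge (Om : pt -> Prop) (v z : pt) (b : R) :
  uf Om z -> in_S1 v -> L_set Om v b -> b <= dot z v.
Proof. intros Hz Hv Hb. exact (proj1 (Hz v Hv) b Hb). Qed.

Lemma U_set_Omega_f_e2 (f : R -> R) : U_set (Omega_f f) (0, 1) 0.
Proof.
  intros c Hc w [[Hw1 Hw2] Hwc].
  rewrite dot_e2 in Hwc. rewrite refl_e2.
  apply Rabs_le_inv in Hw2.
  split; simpl; [lra | apply Rabs_le; lra].
Qed.

Lemma L_set_Omega_f_e2 (f : R -> R) : L_set (Omega_f f) (0, 1) 0.
Proof.
  intros c Hc w [[Hw1 Hw2] Hwc].
  rewrite dot_e2 in Hwc. rewrite refl_e2.
  apply Rabs_le_inv in Hw2.
  split; simpl; [lra | apply Rabs_le; lra].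
Qed.

Lemma U_set_Omega_f_e1 (f : R -> R) (M : R) :
  concave_on01 f -> is_argmax01 f M -> U_set (Omega_f f) (1, 0) ((1 + M) / 2).
Proof.
  intros Hc HM c Hcge w [[Hw1 Hw2] Hwc].
  rewrite dot_e1 in Hwc. rewrite refl_e1.
  pose proof (proj1 HM).
  assert (f (fst w) <= f (2 * c - fst w)).
  { apply (concave_between_argmax f M); auto; lra. }
  split; simpl; lra.
Qed.

Lemma L_set_Omega_f_e1 (f : R -> R) (M : R) :
  concave_on01 f -> is_argmax01 f M -> L_set (Omega_f f) (1, 0) (M / 2).
Proof.
  intros Hc HM c Hcle w [[Hw1 Hw2] Hwc].
  rewrite dot_e1 in Hwc. rewrite refl_e1.
  pose proof (proj1 HM).
  assert (f (fst w) <= f (2 * c - fst w)).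
  { apply (concave_between_argmax f M); auto; lra. }
  split; simpl; lra.
Qed.

Theorem lemma4p6 (f : R -> R) (a b : R) :
  piecewise_C1 f ->
  concave_on01 f ->
  (forall x, 0 <= x <= 1 -> 0 <= f x) ->
  (exists x, 0 <= x <= 1 /\ f x <> 0) ->
  (* a = min of the set of maximum points of f on [0,1] *)
  is_argmax01 f a -> (forall tau, is_argmax01 f tau -> a <= tau) ->
  (* b = max of the set of maximum points of f on [0,1] *)
  is_argmax01 f b -> (forall tau, is_argmax01 f tau -> tau <= b) ->
  forall z, uf (Omega_f f) z ->
    Omega_f f z /\ snd z = 0 /\ a / 2 <= fst z <= (1 + b) / 2.
Proof.
  intros _ Hc Hnn _ Ha _ Hb _ z Hz.
  pose proof (uf_dot_le _ _ _ _ Hz in_S1_e2 (U_set_Omega_f_e2 f)) as Hz2le.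
  pose proof (uf_dot_ge _ _ _ _ Hz in_S1_e2 (L_set_Omega_f_e2 f)) as Hz2ge.
  pose proof (uf_dot_le _ _ _ _ Hz in_S1_e1 (U_set_Omega_f_e1 f b Hc Hb)) as Hz1le.
  pose proof (uf_dot_ge _ _ _ _ Hz in_S1_e1 (L_set_Omega_f_e1 f a Hc Ha)) as Hz1ge.
  rewrite dot_e1 in Hz1le, Hz1ge. rewrite dot_e2 in Hz2le, Hz2ge.
  assert (Hz2 : snd z = 0) by lra.
  destruct Ha as [Ha01 _], Hb as [Hb01 _].
  repeat split; try lra.
  rewrite Hz2, Rabs_R0. apply Hnn. lra.
Qed.
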